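(* Let $\mathsf{K}$ be a field, $m$ a positive integer and $\alpha \in \mathsf{K}$ a primitive $m$-th root of unity. Let $f \in \mathsf{K}[z]$ be a polynomial with at most $t$ nonzero terms and $\deg f < m$, and let $a_i = f(\alpha^i)$ for $i \ge 0$. Let $r \ge 0$, $s > 0$ and $k$ be integers with $\gcd(s,m)=1$ and $k \ge 2t$. Then $f$ is determined by the affine sub-sequence $(a_r, a_{r+s}, a_{r+2s}, \dots, a_{r+(k-1)s})$: if $g \in \mathsf{K}[z]$ has at most $t$ nonzero terms, $\deg g < m$, and $g(\alpha^{r+is}) = a_{r+is}$ for all $0 \le i \le k-1$, then $g = f$. *)

From mathcomp Require Import all_boot all_algebra.
Set Implicit Arguments. Unset Strict Implicit. Unset Printing Implicit Defensive.
Import GRing.Theory.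
Local Open Scope ring_scope.

Definition nterms (K : fieldType) (p : {poly K}) : nat :=
  count (fun c : K => c != 0) (polyseq p).

(* The difference h = g - f has at most 2t <= k nonzero coefficients h_e, all
   with e < m.  Evaluating at alpha^(r + i s) gives
   h(alpha^(r+is)) = sum_e (h_e alpha^(r e)) (beta^e)^i  with beta = alpha^s,
   a primitive m-th root of unity because gcd(s, m) = 1, so the nodes beta^e
   are pairwise distinct.  The k vanishing values form a transposed
   Vandermonde system in the unknowns h_e alpha^(r e), which therefore all
   vanish; as alpha != 0, h = 0. *)

From mathcomp Require Import all_boot all_algebra.
Set Implicit Arguments. Unset Strict Implicit. Unset Printing Implicit Defensive.
Import GRing.Theory.
Local Open Scope ring_scope.

Lemma vandermonde_sum_eq0 (R : idomainType) (I : eqType) (s : seq I)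
    (c b : I -> R) :
  uniq s -> {in s &, injective b} ->
  (forall i, (i < size s)%N -> \sum_(e <- s) c e * b e ^+ i = 0) ->
  {in s, forall e, c e = 0}.
Proof.
move=> s_uniq b_inj c_ortho e0 e0s.
have c_ortho_poly (q : {poly R}) :
    (size q <= size s)%N -> \sum_(e <- s) c e * q.[b e] = 0.
  move=> size_q.
  under eq_bigr => e _ do rewrite horner_coef big_distrr /=.
  rewrite exchange_big /= big1 // => i _.
  under eq_bigr => e _ do rewrite mulrCA.
  by rewrite -big_distrr /= c_ortho ?mulr0 // (leq_trans (ltn_ord i) size_q).
pose q : {poly R} := \prod_(x <- map b (rem e0 s)) ('X - x%:P).
have q_root e : e \in s -> root q (b e) = (e != e0).
  move=> es; rewrite root_prod_XsubC; apply/mapP/idP => [[e']|ne].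
    rewrite mem_rem_uniq // => /andP[ne' e's] /(b_inj _ _ es e's) ->.
    exact: ne'.
  by exists e; rewrite // mem_rem_uniq // inE ne.
have size_q : (size q <= size s)%N.
  by rewrite size_prod_XsubC size_map size_rem //; case: (s) e0s.
move: (c_ortho_poly q size_q); rewrite (bigD1_seq e0) //= big1_seq ?addr0.
  move/eqP; rewrite mulf_eq0 -/(root q (b e0)) q_root // eqxx orbF.
  by move/eqP.
move=> e /andP[ne es]; have /rootP -> : root q (b e) by rewrite q_root.
exact: mulr0.
Qed.

Section PolySupport.
Variable K : fieldType.
Implicit Types p q h : {poly K}.

Definition poly_support p := [seq e <- iota 0 (size p) | p`_e != 0].

Lemma mem_poly_support p e : (e \in poly_support p) = (p`_e != 0).
Proof.
rewrite mem_filter mem_iota add0n /=; apply: andb_idr => pe.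
by rewrite ltnNge; apply: contra pe => /(nth_default 0) ->.
Qed.

Lemma poly_support_uniq p : uniq (poly_support p).
Proof. by rewrite filter_uniq // iota_uniq. Qed.

Lemma size_poly_support p : size (poly_support p) = nterms p.
Proof.
by rewrite size_filter /nterms -[in RHS](mkseq_nth 0 p) /mkseq count_map.
Qed.

Lemma horner_poly_support p x :
  p.[x] = \sum_(e <- poly_support p) p`_e * x ^+ e.
Proof.
rewrite horner_coef -(big_mkord xpredT (fun e => p`_e * x ^+ e)) big_filter.
rewrite [RHS]big_mkcond /index_iota subn0; apply: eq_bigr => e _.
by case: eqP => [->|]; rewrite ?mul0r.
Qed.

Lemma ntermsB_le p q : (nterms (p - q) <= nterms p + nterms q)%N.
Proof.
rewrite -!size_poly_support -size_cat uniq_leq_size ?poly_support_uniq //.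
move=> e; rewrite mem_cat !mem_poly_support coefB.
by apply: contraLR; rewrite negb_or !negbK => /andP[/eqP-> /eqP->]; rewrite subrr.
Qed.

Lemma sparse_poly_eq0 (m : nat) (beta c : K) h :
  m.-primitive_root beta -> c != 0 -> (size h <= m)%N ->
  (forall i, (i < nterms h)%N -> h.[c * beta ^+ i] = 0) -> h = 0.
Proof.
move=> beta_prim c_neq0 size_h h_vanish.
have nodes_inj : {in poly_support h &, injective (fun e => beta ^+ e)}.
  move=> e1 e2; rewrite !mem_filter !mem_iota => /and3P[_ _ e1h] /and3P[_ _ e2h].
  move/eqP; rewrite (eq_prim_root_expr beta_prim) !modn_small //.
  - by move/eqP.
  - exact: leq_trans e2h size_h.
  - exact: leq_trans e1h size_h.
have power_sums_eq0 i : (i < size (poly_support h))%N ->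
    \sum_(e <- poly_support h) h`_e * c ^+ e * (beta ^+ e) ^+ i = 0.
  rewrite size_poly_support => /h_vanish; rewrite horner_poly_support => sum_eq0.
  rewrite -[RHS]sum_eq0.
  by apply: eq_bigr => e _; rewrite exprMn -!exprM mulnC mulrA.
have scaled_eq0 :=
  vandermonde_sum_eq0 (poly_support_uniq h) nodes_inj power_sums_eq0.
apply/polyP => e; rewrite coef0; apply/eqP; apply: contraT => he.
move: (scaled_eq0 e); rewrite mem_poly_support he => /(_ isT)/eqP.
by rewrite mulf_eq0 (negbTE he) expf_eq0 (negbTE c_neq0) andbF.
Qed.

End PolySupport.

Theorem lemma1 (K : fieldType) (m : nat) (alpha : K) (t r s k : nat)
  (f g : {poly K}) :
  (0 < m)%N -> m.-primitive_root alpha ->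
  (nterms f <= t)%N -> (size f <= m)%N ->
  (0 < s)%N -> coprime s m -> (2 * t <= k)%N ->
  (nterms g <= t)%N -> (size g <= m)%N ->
  (forall i : nat, (i < k)%N ->
     g.[alpha ^+ (r + i * s)] = f.[alpha ^+ (r + i * s)]) ->
  g = f.
Proof.
move=> m_gt0 alpha_prim nf sf _ s_coprime tk ng sg fg_agree.
have nterms_gf : (nterms (g - f) <= k)%N.
  by rewrite (leq_trans (ntermsB_le g f)) // (leq_trans _ tk) // mul2n -addnn leq_add.
have alpha_neq0 : alpha != 0 by rewrite (prim_root_eq0 alpha_prim) -lt0n.
apply/eqP; rewrite -subr_eq0; apply/eqP.
apply: (@sparse_poly_eq0 _ m (alpha ^+ s) (alpha ^+ r)).
- by rewrite prim_root_exp_coprime.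
- by rewrite expf_neq0.
- by rewrite (leq_trans (size_polyD _ _)) // size_polyN geq_max sg sf.
- move=> i /leq_trans/(_ nterms_gf) ik.
  by rewrite -exprM -exprD mulnC hornerD hornerN fg_agree // subrr.
Qed.
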